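(* For every regular epistemic transition system, every history $h$ of it and every coalition $C$: $h\nVdash\mathsf{H}_C\bot$.
   Context: Fix a set of agents $\mathcal{A}$; a coalition is a subset of $\mathcal{A}$. Language $\Phi$: $\phi ::= p \mid \neg\phi \mid \phi\to\phi \mid \mathsf{K}_C\phi \mid \mathsf{H}_C\phi$ ($C\subseteq\mathcal{A}$); $\bot$ is the usual false constant. An epistemic transition system is a tuple $(W,\{\sim_a\}_{a\in\mathcal{A}},V,M,\pi)$ with $W$ a set of states, each $\sim_a$ an equivalence relation on $W$, $V$ a nonempty set, $M\subseteq W\times V^{\mathcal{A}}\times W$, $\pi$ mapping propositional variables to subsets of $W$; it is regular if for each $w\in W$ and $\mathbf{s}\in V^{\mathcal{A}}$ there is $w'\in W$ with $(w,\mathbf{s},w')\in M$. For profiles $\mathbf{s}_1\in V^{C_1},\mathbf{s}_2\in V^{C_2}$ and $C\subseteq C_1\cap C_2$, $\mathbf{s}_1=_C\mathbf{s}_2$ means $(\mathbf{s}_1)_a=(\mathbf{s}_2)_a$ for all $a\in C$. A history is a sequence $(w_0,\mathbf{s}_1,w_1,\dots,\mathbf{s}_n,w_n)$, $n\ge0$, with $w_i\in W$, $\mathbf{s}_i\in V^{\mathcal{A}}$, $(w_i,\mathbf{s}_{i+1},w_{i+1})\in M$; $hd(h)$ is its last element, and $h::\mathbf{s}::w$ denotes extension. $h\approx_a h'$ iff the histories have the same length $n$, their $i$-th states are $\sim_a$-related for all $i$, and their $i$-th profiles agree at $a$ for all $i$; $h\approx_C h'$ iff $h\approx_a h'$ for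 all $a\in C$. Satisfaction: $h\Vdash p$ iff $hd(h)\in\pi(p)$; Boolean clauses standard; $h\Vdash\mathsf{K}_C\phi$ iff $h'\Vdash\phi$ for all histories $h'$ with $h\approx_C h'$; $h\Vdash\mathsf{H}_C\phi$ iff there is $\mathbf{s}\in V^C$ such that for every history $h'::\mathbf{s}'::w'$ with $h\approx_C h'$ and $\mathbf{s}=_C\mathbf{s}'$, $h'::\mathbf{s}'::w'\Vdash\phi$. *)

From Stdlib Require Import List RelationClasses.
Import ListNotations.
Set Implicit Arguments.

Definition pvar := nat.

Section Language.
Variable Agent : Type.

Definition coalition := Agent -> Prop.

Inductive form : Type :=
| FVar : pvar -> form
| FNeg : form -> form
| FImp : form -> form -> form
| FK : coalition -> form -> form
| FH : coalition -> form -> form.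

End Language.
Arguments FVar {Agent}.
Arguments FNeg {Agent}.
Arguments FImp {Agent}.
Arguments FK {Agent}.
Arguments FH {Agent}.

Definition FBot (Agent : Type) : form Agent := FNeg (FImp (FVar 0) (FVar 0)).

Record ETS (Agent : Type) : Type := {
  W : Type;
  sim : Agent -> W -> W -> Prop;
  sim_equiv : forall a, Equivalence (sim a);
  V : Type;
  V_nonempty : inhabited V;
  M : W -> (Agent -> V) -> W -> Prop;
  pi : pvar -> W -> Prop
}.

Section Semantics.
Variable Agent : Type.
Variable T : ETS Agent.

Definition profile := Agent -> V T.

Definition cprofile (C : coalition Agent) := {a : Agent | C a} -> V T.

(* A (candidate) history (w0, s1, w1, ..., sn, wn) *)
Record history : Type := mkHist { h_init : W T; h_steps : list (profile * W T) }.

Fixpoint valid_from (w : W T) (l : list (profile * W T)) : Prop :=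
  match l with
  | [] => True
  | (s, w') :: l' => M T w s w' /\ valid_from w' l'
  end.

Definition is_history (h : history) : Prop := valid_from (h_init h) (h_steps h).

Fixpoint last_from (w : W T) (l : list (profile * W T)) : W T :=
  match l with
  | [] => w
  | (_, w') :: l' => last_from w' l'
  end.

Definition hd (h : history) : W T := last_from (h_init h) (h_steps h).

Definition hext (h : history) (s : profile) (w : W T) : history :=
  mkHist (h_init h) (h_steps h ++ [(s, w)]).

Fixpoint equiv_from (a : Agent) (w1 : W T) (l1 : list (profile * W T))
         (w2 : W T) (l2 : list (profile * W T)) : Prop :=
  sim T a w1 w2 /\
  match l1, l2 with
  | [], [] => True
  | (s1, x1) :: r1, (s2, x2) :: r2 => s1 a = s2 a /\ equiv_from a x1 r1 x2 r2
  | _, _ => False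
  end.

Definition hequiv_a (a : Agent) (h h' : history) : Prop :=
  equiv_from a (h_init h) (h_steps h) (h_init h') (h_steps h').

Definition hequiv (C : coalition Agent) (h h' : history) : Prop :=
  forall a, C a -> hequiv_a a h h'.

Definition agree_on (C : coalition Agent) (s1 : cprofile C) (s2 : profile) : Prop :=
  forall (a : Agent) (Ha : C a), s1 (exist _ a Ha) = s2 a.

Fixpoint sat (h : history) (phi : form Agent) : Prop :=
  match phi with
  | FVar p => pi T p (hd h)
  | FNeg psi => ~ sat h psi
  | FImp psi chi => sat h psi -> sat h chi
  | FK C psi => forall h', is_history h' -> hequiv C h h' -> sat h' psi
  | FH C psi => exists s : cprofile C,
      forall (h' : history) (s' : profile) (w' : W T),
        is_history (hext h' s' w') -> hequiv C h h' -> agree_on s s' ->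
        sat (hext h' s' w') psi
  end.

End Semantics.

Definition regular (Agent : Type) (T : ETS Agent) : Prop :=
  forall (w : W T) (s : Agent -> V T), exists w', M T w s w'.

(* A strategy for C witnessing H_C bot would have to make bot true after every
   admissible one-step continuation of every C-indistinguishable history.  But
   h is indistinguishable from itself, the strategy extends (using a default
   action outside C) to a complete profile, and regularity supplies a successor
   state for that profile: this continuation would have to satisfy bot. *)
From Stdlib Require Import RelationClasses Classical ClassicalEpsilon.
From Stdlib Require List.
Import List.ListNotations.
Set Implicit Arguments.

Section OneStepContinuation.
Variable Agent : Type.
Variable T : ETS Agent.

Lemma equiv_from_refl (a : Agent) (w : W T) (l : list (profile T * W T)) :
  equiv_from a w l w l.
Proof.
  pose proof (sim_equiv T a).
  revert w; induction l as [|[s x] l IH]; intros w; simpl.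
  - split; [reflexivity | exact I].
  - split; [reflexivity | split; [reflexivity | apply IH]].
Qed.

Lemma hequiv_refl (C : coalition Agent) (h : history T) : hequiv C h h.
Proof. intros a _; apply equiv_from_refl. Qed.

Lemma valid_from_snoc (w : W T) (l : list (profile T * W T)) s w' :
  valid_from w l -> M T (last_from w l) s w' -> valid_from w (l ++ [(s, w')]).
Proof.
  revert w; induction l as [|[s0 x] l IH]; intros w Hv Hm; simpl in *.
  - tauto.
  - destruct Hv; split; auto.
Qed.

Lemma is_history_hext (h : history T) s w :
  is_history h -> M T (hd h) s w -> is_history (hext h s w).
Proof. apply valid_from_snoc. Qed.

Lemma regular_hext (s : profile T) (h : history T) :
  regular T -> is_history h -> exists w, is_history (hext h s w).
Proof.
  intros Hreg Hh; destruct (Hreg (hd h) s) as [w Hw].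
  exists w; now apply is_history_hext.
Qed.

Lemma cprofile_extends (C : coalition Agent) (s : cprofile T C) :
  exists s' : profile T, agree_on s s'.
Proof.
  destruct (V_nonempty T) as [v].
  exists (fun a => match excluded_middle_informative (C a) with
                   | left Ha => s (exist _ a Ha)
                   | right _ => v
                   end).
  intros a Ha; destruct (excluded_middle_informative (C a)) as [Ha'|]; [|contradiction].
  now rewrite (proof_irrelevance _ Ha Ha').
Qed.

Lemma not_sat_FBot (h : history T) : ~ sat h (FBot Agent).
Proof. simpl; auto. Qed.

End OneStepContinuation.

Theorem lemma14 (Agent : Type) (T : ETS Agent) :
  regular T ->
  forall (h : history T), is_history h ->
  forall (C : coalition Agent), ~ sat h (FH C (FBot Agent)).
Proof.
  intros Hreg h Hh C [s Hs].
  destruct (cprofile_extends s) as [s' Hagree].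
  destruct (regular_hext s' h Hreg Hh) as [w Hext].
  exact (not_sat_FBot (Hs h s' w Hext (hequiv_refl C h) Hagree)).
Qed.
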